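(* Let $(X,\delta_X)$ be a multi-retraceable represented space. Then there is a total representation $\delta:2^\mathbb{N}\to X$ (i.e. a surjective map defined on all of Cantor space $2^\mathbb{N}\subseteq\mathbb{N}^\mathbb{N}$) such that $\delta\equiv\delta_X$. In particular, $X$ is compact with respect to the final topology of $\delta_X$.
   Context: A represented space $(X,\delta_X)$ is a set $X$ with a surjective partial map $\delta_X:\subseteq\mathbb{N}^\mathbb{N}\to X$; it carries the final topology induced by $\delta_X$. For representations $\delta_1,\delta_2$ of the same set, $\delta_1\le\delta_2$ means $\delta_1=\delta_2F$ for some computable partial $F:\subseteq\mathbb{N}^\mathbb{N}\to\mathbb{N}^\mathbb{N}$, and $\equiv$ is the induced equivalence. For $p\in\mathbb{N}^\mathbb{N}$, $p-1$ is the concatenation of $p(0)-1,p(1)-1,\dots$ with $0-1$ read as the empty word. The completion $\overline X=X\cup\{\bot\}$ has the total representation $\delta_{\overline X}(p)=\delta_X(p-1)$ if $p-1$ is an infinite sequence in $\mathrm{dom}(\delta_X)$ and $\delta_{\overline X}(p)=\bot$ otherwise. $X$ is multi-retraceable if there is a computable multi-valued map $r:\overline X\rightrightarrows X$ with $r(x)=\{x\}$ for $x\in X$ (computable meaning it has a computable realizer $F$ with $\delta_X F(p)\in r(\delta_{\overline X}(p))$ for all $p$). *)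

From Stdlib Require Import Arith List.
Import ListNotations.

Definition pair (a b : nat) : nat := (a + b) * (a + b + 1) / 2 + b.

(** Inverse of [pair]: enumerates (0,0),(1,0),(0,1),(2,0),(1,1),(0,2),... *)
Fixpoint unpair (n : nat) : nat * nat :=
  match n with
  | 0 => (0, 0)
  | S n' => let (a, b) := unpair n' in
            match a with
            | 0 => (S b, 0)
            | S a' => (a', S b)
            end
  end.

Fixpoint code_list (l : list nat) : nat :=
  match l with
  | [] => 0
  | x :: l' => S (pair x (code_list l'))
  end.

Inductive rcode : Type :=
| RZero : rcode
| RSucc : rcode
| RFst : rcode
| RSnd : rcode
| RPair : rcode -> rcode -> rcode
| RComp : rcode -> rcode -> rcode
| RRec : rcode -> rcode -> rcode
| RMu : rcode -> rcode.

Inductive eval : rcode -> nat -> nat -> Prop :=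
| ev_zero x : eval RZero x 0
| ev_succ x : eval RSucc x (S x)
| ev_fst x : eval RFst x (fst (unpair x))
| ev_snd x : eval RSnd x (snd (unpair x))
| ev_pair f g x a b : eval f x a -> eval g x b -> eval (RPair f g) x (pair a b)
| ev_comp f g x y z : eval g x y -> eval f y z -> eval (RComp f g) x z
| ev_rec0 f g a y : eval f a y -> eval (RRec f g) (pair a 0) y
| ev_recS f g a n y z : eval (RRec f g) (pair a n) y ->
    eval g (pair a (pair n y)) z -> eval (RRec f g) (pair a (S n)) z
| ev_mu f x n : eval f (pair x n) 0 ->
    (forall j, j < n -> exists v, eval f (pair x j) (S v)) ->
    eval (RMu f) x n.

Definition Baire := nat -> nat.

Definition prefix (p : Baire) (k : nat) : list nat := map p (seq 0 k).

Definition Cantor (p : Baire) : Prop := forall n, p n <= 1.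

(** A code [M] computes a partial map on Baire space: to produce output digit
    [n] on input [p], it examines successively the prefixes of [p] of length
    k = 0,1,2,...; [M (pair (code of p|k) n) = 0] means "no answer yet",
    [= S m] means "output digit n is m".  *)
Definition mach_out (M : rcode) (p : Baire) (n m : nat) : Prop :=
  exists k, eval M (pair (code_list (prefix p k)) n) (S m) /\
    forall j, j < k -> eval M (pair (code_list (prefix p j)) n) 0.

Definition mach_comp (M : rcode) (p q : Baire) : Prop :=
  forall n, mach_out M p n (q n).

(** * Represented spaces: a partial surjection Baire ~> X, given as a
    single-valued relation. *)
Record rep (X : Type) : Type := {
  rep_rel :> Baire -> X -> Prop;
  rep_functional : forall p x y, rep_rel p x -> rep_rel p y -> x = y;
  rep_surj : forall x, exists p, rep_rel p x
}.
Arguments rep_rel {X} _ _ _.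

Definition rdom {X : Type} (d : Baire -> X -> Prop) (p : Baire) : Prop :=
  exists x, d p x.

Definition rep_le {X : Type} (d1 d2 : Baire -> X -> Prop) : Prop :=
  exists M : rcode, forall p x, d1 p x ->
    exists q, mach_comp M p q /\ d2 q x.

Definition rep_equiv {X : Type} (d1 d2 : Baire -> X -> Prop) : Prop :=
  rep_le d1 d2 /\ rep_le d2 d1.

(** * Completion.  [minus1 p q]: p-1 is the infinite sequence q, i.e. the
    nonzero entries of p occur at positions f 0 < f 1 < ... (infinitely many)
    and q i = p (f i) - 1. *)
Definition minus1 (p q : Baire) : Prop :=
  exists f : nat -> nat,
    (forall i, f i < f (S i)) /\
    (forall n, p n <> 0 <-> exists i, f i = n) /\
    (forall i, q i = p (f i) - 1).

(** Representation of the completion X ∪ {⊥}, with ⊥ = None. *)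
Definition compl_rel {X : Type} (d : Baire -> X -> Prop) (p : Baire)
  (x : option X) : Prop :=
  match x with
  | Some x => exists q, minus1 p q /\ d q x
  | None => ~ (exists q x, minus1 p q /\ d q x)
  end.

Definition multi_retraceable {X : Type} (d : rep X) : Prop :=
  exists r : option X -> X -> Prop,
    (forall x y, r (Some x) y <-> y = x) /\
    exists M : rcode, forall p (xb : option X), compl_rel d p xb ->
      exists q y, mach_comp M p q /\ d q y /\ r xb y.

Definition final_open {X : Type} (d : Baire -> X -> Prop) (U : X -> Prop) : Prop :=
  forall p x, d p x -> U x ->
    exists k, forall q y, d q y -> (forall i, i < k -> q i = p i) -> U y.

Definition final_compact {X : Type} (d : Baire -> X -> Prop) : Prop :=
  forall (I : Type) (U : I -> X -> Prop),
    (forall i, final_open d (U i)) -> (forall x, exists i, U i x) ->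
    exists l : list I, forall x, exists i, In i l /\ U i x.

From Stdlib Require Import Arith List Lia Classical ClassicalEpsilon FunctionalExtensionality.
Import ListNotations.

(* Decode a 0-1 sequence by letting a 1 at position [pair a b] stand for the digit [a];
   applying the retraction to the point of the completion named by the decoded
   sequence makes every point of Cantor space a name of a point of [X].  Conversely a
   name [q] of [x] is computably turned into a 0-1 sequence whose ones sit at the
   strictly increasing positions [pair (q i) ⟨q (i-1), ..., q 0⟩]; it decodes back to
   [q], and the retraction fixes [x].  Compactness of [X] is then inherited from
   Cantor space through the fan theorem, machines being continuous. *)

Definition triangle (s : nat) : nat := s * (s + 1) / 2.

Lemma triangle_S s : triangle (S s) = triangle s + S s.
Proof.
  unfold triangle.
  replace (S s * (S s + 1)) with (s * (s + 1) + S s * 2) by nia.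
  now rewrite Nat.div_add by lia.
Qed.

Lemma le_triangle s : s <= triangle s.
Proof. induction s as [|s IH]; [unfold triangle; simpl; lia | rewrite triangle_S; lia]. Qed.

Lemma pair_triangle a b : pair a b = triangle (a + b) + b.
Proof. reflexivity. Qed.

Lemma pair_lower_bound a b : a + b + b <= pair a b.
Proof. rewrite pair_triangle. pose proof (le_triangle (a + b)). lia. Qed.

Lemma pair_S_0 b : pair (S b) 0 = S (pair 0 b).
Proof. rewrite !pair_triangle, !Nat.add_0_r, Nat.add_0_l, triangle_S. lia. Qed.

Lemma pair_l_S a b : pair a (S b) = S (pair (S a) b).
Proof. rewrite !pair_triangle. replace (a + S b) with (S a + b) by lia. lia. Qed.

Lemma unpair_pair a b : unpair (pair a b) = (a, b).
Proof.
  remember (pair a b) as n eqn:En. revert a b En.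
  induction n as [|n IH]; intros a b En.
  - pose proof (pair_lower_bound a b). now replace a with 0 by lia; replace b with 0 by lia.
  - destruct b as [|b]; [destruct a as [|a]|].
    + discriminate.
    + rewrite pair_S_0 in En. injection En as En. simpl. now rewrite (IH 0 a En).
    + rewrite pair_l_S in En. injection En as En. simpl. now rewrite (IH (S a) b En).
Qed.

Lemma fst_unpair_pair a b : fst (unpair (pair a b)) = a.
Proof. now rewrite unpair_pair. Qed.

Lemma snd_unpair_pair a b : snd (unpair (pair a b)) = b.
Proof. now rewrite unpair_pair. Qed.

Lemma pair_unpair n : pair (fst (unpair n)) (snd (unpair n)) = n.
Proof.
  induction n as [|n IH]; [reflexivity|].
  simpl. destruct (unpair n) as [[|a] b]; simpl in *.
  - now rewrite pair_S_0, IH.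
  - now rewrite pair_l_S, IH.
Qed.

Lemma pair_inj a b c d : pair a b = pair c d -> a = c /\ b = d.
Proof.
  intro E. pose proof (unpair_pair a b) as H.
  rewrite E, unpair_pair in H. now injection H.
Qed.

Ltac simpl_unpair := repeat rewrite ?fst_unpair_pair, ?snd_unpair_pair.

(* A structural fixpoint rather than [induction]: in the [RMu] case the
   recursive call is on a derivation produced by the premise [forall j, j < n -> ...],
   for which the induction principle provides no hypothesis. *)
Fixpoint eval_functional c x y (H : eval c x y) {struct H} :
  forall y', eval c x y' -> y = y'.
Proof.
  destruct H as [| | | |f g x a b Hf Hg|f g x y z Hg Hf|f g a y Hf|f g a n y z Hr Hg
                |f x n Hzero Hpos];
    intros y' H'; inversion H'; subst;
    repeat match goal with E : pair _ _ = pair _ _ |- _ =>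
      apply pair_inj in E as [? E]; try discriminate E; try injection E as E; subst end.
  1-4: reflexivity.
  - match goal with Hf' : eval f x _, Hg' : eval g x _ |- _ =>
      now rewrite (eval_functional _ _ _ Hf _ Hf'), (eval_functional _ _ _ Hg _ Hg') end.
  - match goal with Hg' : eval g x ?u |- _ =>
      rewrite <- (eval_functional _ _ _ Hg _ Hg') in * end.
    match goal with Hf' : eval f y y' |- _ => exact (eval_functional _ _ _ Hf _ Hf') end.
  - match goal with Hf' : eval f a y' |- _ => exact (eval_functional _ _ _ Hf _ Hf') end.
  - match goal with Hr' : eval (RRec f g) (pair a n) ?u |- _ =>
      rewrite <- (eval_functional _ _ _ Hr _ Hr') in * end.
    match goal with Hg' : eval g _ y' |- _ => exact (eval_functional _ _ _ Hg _ Hg') end.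
  - match goal with Hzero' : eval f (pair x y') 0, Hpos' : forall j, j < y' -> _ |- _ =>
      destruct (Nat.lt_trichotomy n y') as [Hl|[He|Hl]];
      [destruct (Hpos' n Hl) as [v Hv]; discriminate (eval_functional _ _ _ Hzero _ Hv)
      |exact He
      |destruct (Hpos y' Hl) as [v Hv]; discriminate (eval_functional _ _ _ Hv _ Hzero')] end.
Qed.

Lemma mach_out_functional M p n m m' : mach_out M p n m -> mach_out M p n m' -> m = m'.
Proof.
  intros [k [Hk Hbefore]] [k' [Hk' Hbefore']].
  destruct (Nat.lt_trichotomy k k') as [H|[<-|H]].
  - discriminate (eval_functional _ _ _ Hk _ (Hbefore' _ H)).
  - pose proof (eval_functional _ _ _ Hk _ Hk'). congruence.
  - discriminate (eval_functional _ _ _ Hk' _ (Hbefore _ H)).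
Qed.

Lemma mach_comp_functional M p q q' : mach_comp M p q -> mach_comp M p q' -> q = q'.
Proof.
  intros H H'. apply functional_extensionality. intro n.
  exact (mach_out_functional _ _ _ _ _ (H n) (H' n)).
Qed.

Definition computes (c : rcode) (f : nat -> nat) : Prop := forall x, eval c x (f x).

Lemma computes_ext c f g : computes c f -> (forall x, f x = g x) -> computes c g.
Proof. intros H E x. rewrite <- E. apply H. Qed.

Lemma computes_zero : computes RZero (fun _ => 0).
Proof. intro. constructor. Qed.

Lemma computes_succ : computes RSucc S.
Proof. intro. constructor. Qed.

Lemma computes_fst : computes RFst (fun x => fst (unpair x)).
Proof. intro. constructor. Qed.

Lemma computes_snd : computes RSnd (fun x => snd (unpair x)).
Proof. intro. constructor. Qed.

Lemma computes_pair a b A B :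
  computes a A -> computes b B -> computes (RPair a b) (fun x => pair (A x) (B x)).
Proof. intros HA HB x. constructor; auto. Qed.

Lemma computes_comp a b A B :
  computes a A -> computes b B -> computes (RComp a b) (fun x => A (B x)).
Proof. intros HA HB x. econstructor; eauto. Qed.

Fixpoint prim_rec (F G : nat -> nat) (a n : nat) : nat :=
  match n with
  | 0 => F a
  | S n => G (pair a (pair n (prim_rec F G a n)))
  end.

Lemma eval_rec cf cg F G a n :
  computes cf F -> computes cg G -> eval (RRec cf cg) (pair a n) (prim_rec F G a n).
Proof.
  intros HF HG. induction n as [|n IH]; [apply ev_rec0 | eapply ev_recS]; eauto.
Qed.

Definition RId : rcode := RPair RFst RSnd.

Lemma computes_id : computes RId (fun x => x).
Proof.
  eapply computes_ext; [exact (computes_pair _ _ _ _ computes_fst computes_snd)|].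
  exact pair_unpair.
Qed.

Fixpoint RConst (k : nat) : rcode :=
  match k with 0 => RZero | S k => RComp RSucc (RConst k) end.

Lemma computes_const k : computes (RConst k) (fun _ => k).
Proof.
  induction k as [|k IH]; [exact computes_zero|].
  exact (computes_comp _ _ _ _ computes_succ IH).
Qed.

Ltac computes_lemma :=
  first [ apply computes_id | apply computes_const | apply computes_zero | apply computes_succ
        | apply computes_fst | apply computes_snd | apply computes_pair | apply computes_comp ].

(* The target function is first replaced by an evar, so that it is assembled
   bottom-up from the program; the resulting equation is left as a side goal. *)
Ltac computes_program :=
  eapply computes_ext; [repeat first [eassumption | computes_lemma] | intro; cbv beta; simpl_unpair].

Definition RIter (ci cs cn : rcode) : rcode :=
  RComp (RRec ci (RComp cs (RComp RSnd RSnd))) (RPair RId cn).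

Lemma computes_iter ci cs cn I St N :
  computes ci I -> computes cs St -> computes cn N ->
  computes (RIter ci cs cn) (fun x => Nat.iter (N x) St (I x)).
Proof.
  intros HI HS HN x. econstructor; [exact (computes_pair _ _ _ _ computes_id HN x)|].
  assert (E : forall n,
    prim_rec I (fun y => St (snd (unpair (snd (unpair y))))) x n = Nat.iter n St (I x)).
  { induction n as [|n IH]; simpl; simpl_unpair; congruence. }
  rewrite <- E. apply eval_rec; [exact HI|]. computes_program. reflexivity.
Qed.

Definition RIfZero (cx ca cb : rcode) : rcode :=
  RComp (RRec RFst (RComp RSnd RFst)) (RPair (RPair ca cb) cx).

Lemma computes_ifzero cx ca cb X A B :
  computes cx X -> computes ca A -> computes cb B ->
  computes (RIfZero cx ca cb) (fun x => match X x with 0 => A x | S _ => B x end).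
Proof.
  intros HX HA HB x. econstructor; [apply computes_pair; [apply computes_pair|]; eauto|].
  replace (match X x with 0 => A x | S _ => B x end) with
    (prim_rec (fun y => fst (unpair y)) (fun y => snd (unpair (fst (unpair y))))
       (pair (A x) (B x)) (X x)) by (destruct (X x); simpl; now simpl_unpair).
  apply eval_rec; computes_program; reflexivity.
Qed.

Definition RPred : rcode := RComp (RRec RZero (RComp RFst RSnd)) (RPair RZero RId).

Lemma computes_pred : computes RPred Nat.pred.
Proof.
  intro x. econstructor; [exact (computes_pair _ _ _ _ computes_zero computes_id x)|].
  replace (Nat.pred x) with
    (prim_rec (fun _ => 0) (fun y => fst (unpair (snd (unpair y)))) 0 x)
    by (destruct x; simpl; now simpl_unpair).
  apply eval_rec; computes_program; reflexivity.
Qed.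

Definition RSub (ca cb : rcode) : rcode := RIter ca RPred cb.

Lemma computes_sub ca cb A B :
  computes ca A -> computes cb B -> computes (RSub ca cb) (fun x => A x - B x).
Proof.
  intros HA HB. eapply computes_ext; [exact (computes_iter _ _ _ _ _ _ HA computes_pred HB)|].
  intro x. cbv beta. induction (B x) as [|n IH]; simpl; [lia|now rewrite IH, Nat.sub_succ_r].
Qed.

Definition REqb (ca cb : rcode) : rcode :=
  RIfZero (RSub ca cb) (RIfZero (RSub cb ca) (RConst 1) (RConst 0)) (RConst 0).

Lemma computes_eqb ca cb A B :
  computes ca A -> computes cb B ->
  computes (REqb ca cb) (fun x => if A x =? B x then 1 else 0).
Proof.
  intros HA HB. eapply computes_ext.
  - repeat first [apply computes_ifzero | apply computes_sub | eassumption | apply computes_const].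
  - intro x. cbv beta. destruct (Nat.eqb_spec (A x) (B x)) as [E|E].
    + now rewrite E, Nat.sub_diag.
    + destruct (A x - B x) eqn:E1; [destruct (B x - A x) eqn:E2|]; lia.
Qed.

Definition code_head (c : nat) : nat := fst (unpair (Nat.pred c)).
Definition code_tail (c : nat) : nat := snd (unpair (Nat.pred c)).

Definition RHead : rcode := RComp RFst RPred.
Definition RTail : rcode := RComp RSnd RPred.
Definition RCons (ca cb : rcode) : rcode := RComp RSucc (RPair ca cb).

Lemma computes_head : computes RHead code_head.
Proof. exact (computes_comp _ _ _ _ computes_fst computes_pred). Qed.

Lemma computes_tail : computes RTail code_tail.
Proof. exact (computes_comp _ _ _ _ computes_snd computes_pred). Qed.

Lemma computes_cons ca cb A B :
  computes ca A -> computes cb B -> computes (RCons ca cb) (fun x => S (pair (A x) (B x))).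
Proof. intros. apply computes_comp; [apply computes_succ | now apply computes_pair]. Qed.

Ltac computes_lemma ::=
  first [ apply computes_head | apply computes_tail | apply computes_cons
        | apply computes_eqb | apply computes_sub | apply computes_ifzero | apply computes_iter
        | apply computes_id | apply computes_const | apply computes_zero | apply computes_succ
        | apply computes_fst | apply computes_snd | apply computes_pair | apply computes_comp ].

Lemma length_le_code_list l : length l <= code_list l.
Proof.
  induction l as [|a l IH]; simpl; [lia|]. pose proof (pair_lower_bound a (code_list l)). lia.
Qed.

Definition fold_step (F : nat -> nat) (y : nat) : nat :=
  match fst (unpair y) with
  | 0 => y
  | S _ => pair (code_tail (fst (unpair y))) (F (pair (snd (unpair y)) (code_head (fst (unpair y)))))
  end.

Definition fold_code (F : nat -> nat) (x : nat) : nat :=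
  snd (unpair (Nat.iter (fst (unpair x)) (fold_step F) x)).

Definition RFold (cf : rcode) : rcode :=
  RComp RSnd (RIter RId (RIfZero RFst RId (RPair (RComp RTail RFst)
                                             (RComp cf (RPair RSnd (RComp RHead RFst))))) RFst).

Lemma computes_fold cf F : computes cf F -> computes (RFold cf) (fold_code F).
Proof.
  intro HF. computes_program. reflexivity.
Qed.

Lemma fold_code_spec F l acc :
  fold_code F (pair (code_list l) acc) = fold_left (fun a y => F (pair a y)) l acc.
Proof.
  assert (Hdone : forall k acc, Nat.iter k (fold_step F) (pair 0 acc) = pair 0 acc).
  { induction k as [|k IH]; intros; simpl; [reflexivity|].
    rewrite IH. unfold fold_step. now simpl_unpair. }
  (* The iteration count [code_list l] may exceed [length l]; extra steps are idle. *)
  assert (Hrun : forall l k acc, length l <= k ->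
     Nat.iter k (fold_step F) (pair (code_list l) acc)
     = pair 0 (fold_left (fun a y => F (pair a y)) l acc)).
  { clear l acc. intro l. induction l as [|a l IH]; intros k acc Hk; [apply Hdone|].
    destruct k as [|k]; simpl in Hk; [lia|].
    rewrite Nat.iter_succ_r. unfold fold_step at 2. simpl_unpair.
    unfold code_tail, code_head. simpl. simpl_unpair. apply IH. lia. }
  unfold fold_code. simpl_unpair. rewrite Hrun; [now simpl_unpair|apply length_le_code_list].
Qed.

Definition RPrecomp (cg M : rcode) : rcode := RComp M (RPair (RComp cg RFst) RSnd).

Lemma mach_comp_precomp cg G (g : Baire -> Baire) M p q :
  computes cg G ->
  (forall k, G (code_list (prefix p k)) = code_list (prefix (g p) k)) ->
  mach_comp M (g p) q -> mach_comp (RPrecomp cg M) p q.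
Proof.
  intros HG Hprefix H n. destruct (H n) as [k [Hk Hbefore]].
  assert (Hrun : forall j v, eval M (pair (code_list (prefix (g p) j)) n) v ->
                             eval (RPrecomp cg M) (pair (code_list (prefix p j)) n) v).
  { intros j v Hv. econstructor.
    - exact (computes_pair _ _ _ _ (computes_comp _ _ _ _ HG computes_fst) computes_snd _).
    - cbv beta. simpl_unpair. now rewrite Hprefix. }
  exists k. split; auto.
Qed.

(** * Decoding Cantor sequences *)

(* A nonzero entry at position [pair a b] stands for the digit [a]; after
   [minus1] removes the zeros, every Baire sequence arises this way. *)
Definition decode_digit (n v : nat) : nat :=
  match v with 0 => 0 | S _ => S (fst (unpair n)) end.

Definition decode (p : Baire) : Baire := fun n => decode_digit n (p n).

Fixpoint decode_from (i : nat) (l : list nat) : list nat :=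
  match l with
  | [] => []
  | v :: l => decode_digit i v :: decode_from (S i) l
  end.

Lemma decode_from_prefix p i k :
  decode_from i (map p (seq i k)) = map (decode p) (seq i k).
Proof. revert i. induction k as [|k IH]; intro i; simpl; [|rewrite IH]; reflexivity. Qed.

(* The state [pair i (code_list r)] holds the next position and the decoded
   digits in reverse order; a second fold reverses them. *)
Definition decode_step (z : nat) : nat :=
  let i := fst (unpair (fst (unpair z))) in
  pair (S i) (S (pair (decode_digit i (snd (unpair z))) (snd (unpair (fst (unpair z)))))).

Definition cons_step (z : nat) : nat := S (pair (snd (unpair z)) (fst (unpair z))).

Definition decode_code (c : nat) : nat :=
  fold_code cons_step
    (pair (snd (unpair (fold_code decode_step (pair c (pair 0 0))))) 0).

Definition RDecode : rcode :=
  let step := RPair (RComp RSucc (RComp RFst RFst))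
                    (RCons (RIfZero RSnd (RConst 0) (RComp RSucc (RComp RFst (RComp RFst RFst))))
                           (RComp RSnd RFst)) in
  RComp (RFold (RCons RSnd RFst))
        (RPair (RComp RSnd (RComp (RFold step) (RPair RId (RConst (pair 0 0))))) (RConst 0)).

Lemma computes_decode : computes RDecode decode_code.
Proof.
  assert (Hstep : computes (RPair (RComp RSucc (RComp RFst RFst))
                    (RCons (RIfZero RSnd (RConst 0) (RComp RSucc (RComp RFst (RComp RFst RFst))))
                           (RComp RSnd RFst))) decode_step).
  { computes_program. unfold decode_step, decode_digit. destruct (snd (unpair _)); reflexivity. }
  assert (Hcons : computes (RCons RSnd RFst) cons_step) by (computes_program; reflexivity).
  apply computes_fold in Hstep. apply computes_fold in Hcons.
  computes_program. reflexivity.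
Qed.

Lemma decode_code_spec l : decode_code (code_list l) = code_list (decode_from 0 l).
Proof.
  assert (Hdecode : forall l i r,
    fold_left (fun a y => decode_step (pair a y)) l (pair i (code_list r))
    = pair (i + length l) (code_list (rev (decode_from i l) ++ r))).
  { clear l. intro l. induction l as [|v l IH]; intros i r; simpl; [now rewrite Nat.add_0_r|].
    unfold decode_step at 2. simpl_unpair.
    change (S (pair (decode_digit i v) (code_list r))) with (code_list (decode_digit i v :: r)).
    rewrite IH, <- app_assoc. simpl. f_equal. lia. }
  assert (Hrev : forall l r,
    fold_left (fun a y => cons_step (pair a y)) l (code_list r) = code_list (rev l ++ r)).
  { clear l. intro l. induction l as [|v l IH]; intro r; simpl; [reflexivity|].
    unfold cons_step at 2. simpl_unpair.
    change (S (pair v (code_list r))) with (code_list (v :: r)).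
    now rewrite IH, <- app_assoc. }
  unfold decode_code. rewrite fold_code_spec. change (pair 0 0) with (pair 0 (code_list [])).
  rewrite Hdecode. simpl_unpair. change 0 with (code_list []) at 2.
  now rewrite fold_code_spec, Hrev, !app_nil_r, rev_involutive.
Qed.

Lemma decode_code_prefix p k :
  decode_code (code_list (prefix p k)) = code_list (prefix (decode p) k).
Proof. unfold prefix. now rewrite decode_code_spec, decode_from_prefix. Qed.

(** * Encoding Baire sequences *)

Lemma prefix_S p k : prefix p (S k) = prefix p k ++ [p k].
Proof. unfold prefix. now rewrite seq_S, map_app. Qed.

Lemma length_prefix p k : length (prefix p k) = k.
Proof. unfold prefix. now rewrite length_map, length_seq. Qed.

Lemma prefix_eq_iff p p' k : prefix p' k = prefix p k <-> forall i, i < k -> p' i = p i.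
Proof.
  unfold prefix. rewrite map_ext_in_iff.
  split; intros H i Hi; apply H; [apply in_seq; lia|apply in_seq in Hi; lia].
Qed.

(* The nonzero entries of [encode q] sit at the strictly increasing positions
   [pair (q i) ⟨q (i-1), ..., q 0⟩], so that [decode] reads [q] back off them. *)
Definition encode_pos (q : Baire) (i : nat) : nat := pair (q i) (code_list (rev (prefix q i))).

Definition encode (q : Baire) : Baire :=
  fun n => Nat.b2n (existsb (fun i => encode_pos q i =? n) (seq 0 (S n))).

Lemma le_encode_pos q i : i <= encode_pos q i.
Proof.
  pose proof (length_le_code_list (rev (prefix q i))) as H.
  rewrite length_rev, length_prefix in H.
  pose proof (pair_lower_bound (q i) (code_list (rev (prefix q i)))).
  unfold encode_pos. lia.
Qed.

Lemma encode_pos_lt q i : encode_pos q i < encode_pos q (S i).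
Proof.
  unfold encode_pos at 2. rewrite prefix_S, rev_app_distr. simpl. fold (encode_pos q i).
  pose proof (pair_lower_bound (q (S i)) (S (encode_pos q i))). lia.
Qed.

Lemma encode_Cantor q : Cantor (encode q).
Proof. intro n. unfold encode. destruct (existsb _ _); simpl; lia. Qed.

Lemma encode_neq0 q n : encode q n <> 0 <-> exists i, encode_pos q i = n.
Proof.
  unfold encode. destruct (existsb _ _) eqn:E; simpl; split; intro H; try congruence.
  - apply existsb_exists in E as [i [_ Hi]]. apply Nat.eqb_eq in Hi. eauto.
  - destruct H as [i Hi]. exfalso. apply Bool.not_true_iff_false in E. apply E.
    apply existsb_exists. exists i. split; [|now apply Nat.eqb_eq].
    pose proof (le_encode_pos q i). apply in_seq. lia.
Qed.

Lemma minus1_decode_encode q : minus1 (decode (encode q)) q.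
Proof.
  exists (encode_pos q). split; [exact (encode_pos_lt q)|split].
  - intro n. rewrite <- encode_neq0. unfold decode, decode_digit.
    destruct (encode q n); split; congruence.
  - intro i. unfold decode, decode_digit.
    destruct (encode q (encode_pos q i)) eqn:E.
    + exfalso. assert (encode q (encode_pos q i) <> 0) by (apply encode_neq0; eauto). congruence.
    + unfold encode_pos. simpl_unpair. lia.
Qed.

(* The state after reading [prefix q j], when computing digit [n] of [encode q],
   is [pair n (pair j (pair (code_list (rev (prefix q j))) found))]. *)
Definition encode_step (z : nat) : nat :=
  let s := fst (unpair z) in
  let x := snd (unpair z) in
  let n := fst (unpair s) in
  let j := fst (unpair (snd (unpair s))) in
  let t := fst (unpair (snd (unpair (snd (unpair s))))) in
  let found := snd (unpair (snd (unpair (snd (unpair s))))) in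
  pair n (pair (S j) (pair (S (pair x t))
    (match found with 0 => Nat.b2n (pair x t =? n) | S _ => 1 end))).

Definition encode_state (x : nat) : nat :=
  fold_code encode_step (pair (fst (unpair x)) (pair (snd (unpair x)) (pair 0 (pair 0 0)))).

Definition encode_out (x : nat) : nat :=
  match fst (unpair (snd (unpair (encode_state x)))) - snd (unpair x) with
  | 0 => 0
  | S _ => S (snd (unpair (snd (unpair (snd (unpair (encode_state x)))))))
  end.

Definition REncodeState : rcode :=
  let n := RComp RFst RFst in
  let j := RComp RFst (RComp RSnd RFst) in
  let t := RComp RFst (RComp RSnd (RComp RSnd RFst)) in
  let found := RComp RSnd (RComp RSnd (RComp RSnd RFst)) in
  let step := RPair n (RPair (RComp RSucc j)
                (RPair (RCons RSnd t) (RIfZero found (REqb (RPair RSnd t) n) (RConst 1)))) in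
  RComp (RFold step) (RPair RFst (RPair RSnd (RConst (pair 0 (pair 0 0))))).

Definition REncode : rcode :=
  RIfZero (RSub (RComp RFst (RComp RSnd REncodeState)) RSnd) (RConst 0)
          (RComp RSucc (RComp RSnd (RComp RSnd (RComp RSnd REncodeState)))).

Lemma computes_encode_out : computes REncode encode_out.
Proof.
  assert (Hstep : computes
    (let n := RComp RFst RFst in
     let j := RComp RFst (RComp RSnd RFst) in
     let t := RComp RFst (RComp RSnd (RComp RSnd RFst)) in
     let found := RComp RSnd (RComp RSnd (RComp RSnd RFst)) in
     RPair n (RPair (RComp RSucc j)
       (RPair (RCons RSnd t) (RIfZero found (REqb (RPair RSnd t) n) (RConst 1))))) encode_step).
  { cbv zeta. computes_program. unfold encode_step. cbv zeta.
    destruct (snd (unpair (snd (unpair (snd (unpair (fst (unpair _)))))))); reflexivity. }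
  apply computes_fold in Hstep.
  assert (Hstate : computes REncodeState encode_state) by (computes_program; reflexivity).
  computes_program. reflexivity.
Qed.

Lemma encode_state_prefix q n j :
  encode_state (pair (code_list (prefix q j)) n)
  = pair n (pair j (pair (code_list (rev (prefix q j)))
                         (Nat.b2n (existsb (fun i => encode_pos q i =? n) (seq 0 j))))).
Proof.
  unfold encode_state. simpl_unpair. rewrite fold_code_spec.
  induction j as [|j IH]; [reflexivity|].
  rewrite prefix_S, fold_left_app, IH, seq_S, existsb_app, rev_app_distr.
  cbn [fold_left existsb]. unfold encode_step. simpl_unpair. fold (encode_pos q j).
  now destruct (existsb _ (seq 0 j)); simpl; [|rewrite Bool.orb_false_r].
Qed.

Lemma mach_comp_encode q : mach_comp REncode q (encode q).
Proof.
  assert (Hout : forall j n, encode_out (pair (code_list (prefix q j)) n)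
    = if j - n =? 0 then 0 else S (Nat.b2n (existsb (fun i => encode_pos q i =? n) (seq 0 j)))).
  { intros j n. unfold encode_out. rewrite encode_state_prefix. simpl_unpair.
    now destruct (j - n). }
  intro n. exists (S n). split.
  - pose proof (computes_encode_out (pair (code_list (prefix q (S n))) n)) as H.
    rewrite Hout in H. now replace (S n - n =? 0) with false in H by (symmetry; apply Nat.eqb_neq; lia).
  - intros j Hj. pose proof (computes_encode_out (pair (code_list (prefix q j)) n)) as H.
    rewrite Hout in H. now replace (j - n =? 0) with true in H by (symmetry; apply Nat.eqb_eq; lia).
Qed.

(** * Continuity of machines and compactness of Cantor space *)

Lemma mach_comp_continuous M p q K : mach_comp M p q ->
  exists k, forall p' q', (forall i, i < k -> p' i = p i) -> mach_comp M p' q' ->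
    forall n, n < K -> q' n = q n.
Proof.
  intro H. induction K as [|K [k Hk]]; [exists 0; intros; lia|].
  destruct (H K) as [kK [HK Hbefore]].
  exists (Nat.max k kK). intros p' q' Hagree Hp' n Hn.
  assert (Hprefix : forall j, j <= kK -> prefix p' j = prefix p j)
    by (intros j Hj; apply prefix_eq_iff; intros; apply Hagree; lia).
  destruct (Nat.eq_dec n K) as [->|Hne].
  - apply (mach_out_functional M p' K); [apply Hp'|].
    exists kK. rewrite Hprefix by lia. split; [exact HK|].
    intros j Hj. rewrite Hprefix by lia. auto.
  - apply (Hk p'); auto; [intros; apply Hagree|]; lia.
Qed.

Section FanTheorem.
Variable P : list nat -> Prop.
Hypothesis P_split : forall s, P (s ++ [0]) -> P (s ++ [1]) -> P s.

Fixpoint bad_branch (n : nat) : list nat :=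
  match n with
  | 0 => []
  | S n => let s := bad_branch n in
           if excluded_middle_informative (P (s ++ [0])) then s ++ [1] else s ++ [0]
  end.

Lemma bad_branch_spec n : ~ P [] ->
  ~ P (bad_branch n) /\ length (bad_branch n) = n /\
  exists b, b <= 1 /\ bad_branch (S n) = bad_branch n ++ [b].
Proof.
  intro Hnil. induction n as [|n [Hbad [Hlen [b [Hb Hnext]]]]].
  - split; [exact Hnil|split; [reflexivity|]]. simpl.
    destruct excluded_middle_informative; eexists; (split; [|reflexivity]); lia.
  - assert (Hbad' : ~ P (bad_branch n ++ [b])).
    { simpl in Hnext. destruct excluded_middle_informative as [H0|H0];
        apply app_inv_head in Hnext; injection Hnext as <-; auto. }
    rewrite Hnext. split; [exact Hbad'|split; [rewrite length_app; simpl; lia|]].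
    cbn [bad_branch]. rewrite <- Hnext.
    destruct excluded_middle_informative; eexists; (split; [|reflexivity]); lia.
Qed.

Lemma fan_theorem : (forall p, Cantor p -> exists k, P (prefix p k)) -> P [].
Proof.
  intro Hbar. apply NNPP. intro Hnil.
  pose (p n := nth n (bad_branch (S n)) 0).
  assert (Hp : forall n, bad_branch (S n) = bad_branch n ++ [p n] /\ p n <= 1).
  { intro n. destruct (bad_branch_spec n Hnil) as [_ [Hlen [b [Hb Hnext]]]].
    unfold p. rewrite Hnext, app_nth2, Hlen, Nat.sub_diag by lia. auto. }
  assert (Hprefix : forall k, prefix p k = bad_branch k).
  { induction k as [|k IH]; [reflexivity|]. rewrite prefix_S, IH. symmetry. apply Hp. }
  destruct (Hbar p) as [k Hk]; [intro n; apply Hp|].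
  rewrite Hprefix in Hk. exact (proj1 (bad_branch_spec k Hnil) Hk).
Qed.
End FanTheorem.

Lemma final_compact_of_Cantor_rep X (delta d : Baire -> X -> Prop) :
  (forall p, Cantor p <-> rdom delta p) -> (forall x, exists p, delta p x) ->
  rep_le delta d -> final_compact d.
Proof.
  intros Hdom Hsurj [M HM] I U Hopen Hcover.
  pose (good s := exists l : list I, forall p, Cantor p -> prefix p (length s) = s ->
                  forall y, delta p y -> exists i, In i l /\ U i y).
  assert (Hgood : good []).
  { apply fan_theorem.
    - intros s [l0 H0] [l1 H1]. exists (l0 ++ l1). intros p Hp Hs y Hy.
      assert (Hps : prefix p (length (s ++ [p (length s)])) = s ++ [p (length s)])
        by (now rewrite length_app, Nat.add_1_r, prefix_S, Hs).
      assert (Hb : p (length s) <= 1) by apply Hp.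
      destruct (p (length s)) as [|[|b]]; [| |lia];
        [destruct (H0 p Hp Hps y Hy) as [i [Hi HU]]|destruct (H1 p Hp Hps y Hy) as [i [Hi HU]]];
        exists i; split; auto; apply in_or_app; auto.
    - intros p Hp. apply Hdom in Hp as [x Hx].
      destruct (HM p x Hx) as [q [Hq Hqx]].
      destruct (Hcover x) as [i Hi].
      destruct (Hopen i q x Hqx Hi) as [K HK].
      destruct (mach_comp_continuous M p q K Hq) as [k Hk].
      exists k, [i]. intros p' Hp' Hprefix y Hy.
      destruct (HM p' y Hy) as [q' [Hq' Hq'y]].
      rewrite length_prefix, prefix_eq_iff in Hprefix.
      exists i. split; [now left|]. apply (HK q' y Hq'y). eauto. }
  destruct Hgood as [l Hl]. exists l. intro x.
  destruct (Hsurj x) as [p Hp]. apply (Hl p); [apply Hdom; now exists x|reflexivity|exact Hp].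
Qed.

Lemma compl_rel_total X (d : Baire -> X -> Prop) p : exists xb, compl_rel d p xb.
Proof.
  destruct (classic (exists q x, minus1 p q /\ d q x)) as [[q [x Hx]]|Hnone].
  - exists (Some x). exists q. exact Hx.
  - now exists None.
Qed.

Section CantorRepresentation.
Variables (X : Type) (dX : rep X) (r : option X -> X -> Prop) (M : rcode).
Hypothesis r_Some : forall x y, r (Some x) y <-> y = x.
Hypothesis M_realizes_r : forall p xb, compl_rel dX p xb ->
  exists q y, mach_comp M p q /\ dX q y /\ r xb y.

Definition cantor_rep (p : Baire) (x : X) : Prop :=
  Cantor p /\ exists q, mach_comp (RPrecomp RDecode M) p q /\ dX q x.

Lemma mach_comp_decode p q : mach_comp M (decode p) q -> mach_comp (RPrecomp RDecode M) p q.
Proof. apply mach_comp_precomp with (G := decode_code); [exact computes_decode|apply decode_code_prefix]. Qed.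

Lemma cantor_rep_functional p x y : cantor_rep p x -> cantor_rep p y -> x = y.
Proof.
  intros [_ [q [Hq Hx]]] [_ [q' [Hq' Hy]]].
  rewrite (mach_comp_functional _ _ _ _ Hq Hq') in Hx.
  exact (rep_functional _ dX _ _ _ Hx Hy).
Qed.

Lemma cantor_rep_dom p : Cantor p <-> rdom cantor_rep p.
Proof.
  split; [|now intros [x [Hp _]]].
  intro Hp. destruct (compl_rel_total _ dX (decode p)) as [xb Hxb].
  destruct (M_realizes_r _ _ Hxb) as [q [y [Hq [Hy _]]]].
  exists y. split; [exact Hp|]. exists q. split; [apply mach_comp_decode|]; assumption.
Qed.

Lemma cantor_rep_encode q x : dX q x -> cantor_rep (encode q) x.
Proof.
  intro Hqx.
  assert (Hxb : compl_rel dX (decode (encode q)) (Some x))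
    by (exists q; split; [apply minus1_decode_encode|exact Hqx]).
  destruct (M_realizes_r _ _ Hxb) as [q' [y [Hq' [Hy Hry]]]].
  apply r_Some in Hry as ->.
  split; [apply encode_Cantor|]. exists q'. split; [apply mach_comp_decode|]; assumption.
Qed.

Lemma cantor_rep_surj x : exists p, cantor_rep p x.
Proof. destruct (rep_surj _ dX x) as [q Hq]. exists (encode q). now apply cantor_rep_encode. Qed.

Lemma cantor_rep_equiv : rep_equiv cantor_rep dX.
Proof.
  split.
  - exists (RPrecomp RDecode M). intros p x [_ [q Hq]]. now exists q.
  - exists REncode. intros q x Hqx. exists (encode q).
    split; [apply mach_comp_encode|now apply cantor_rep_encode].
Qed.

End CantorRepresentation.

Theorem proposition2p8 (X : Type) (dX : rep X) :
  multi_retraceable dX ->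
  (exists delta : Baire -> X -> Prop,
      (forall p x y, delta p x -> delta p y -> x = y) /\
      (forall p, Cantor p <-> exists x, delta p x) /\
      (forall x, exists p, delta p x) /\
      rep_equiv delta dX) /\
  final_compact dX.
Proof.
  intros [r [r_Some [M M_realizes_r]]].
  pose proof (cantor_rep_dom X dX r M M_realizes_r) as Hdom.
  pose proof (cantor_rep_surj X dX r M r_Some M_realizes_r) as Hsurj.
  pose proof (cantor_rep_equiv X dX r M r_Some M_realizes_r) as Hequiv.
  split.
  - exists (cantor_rep X dX M).
    split; [apply cantor_rep_functional|split; [exact Hdom|split; [exact Hsurj|exact Hequiv]]].
  - exact (final_compact_of_Cantor_rep _ _ _ Hdom Hsurj (proj1 Hequiv)).
Qed.
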